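(* Every finite nonempty left-commutative semigroup, i.e. one satisfying $xya=yxa$ for all $x,y,a$, is $K$-thin.
   Context: For a finite nonempty semigroup $S$, the minimal ideal $K(S)$ is the intersection of all nonempty two-sided ideals of $S$. A Rees matrix semigroup $\mathcal{M}(H;I,J;p)$, for sets $I,J$, a group $H$ and a function $p\colon J\times I\to H$, is the set $I\times H\times J$ with product $(i,h,j)(i',h',j')=(i,h\,p(j,i')\,h',j')$. It is known that $K(S)$ is always isomorphic to such a Rees matrix semigroup with $H$ a finite group and $p$ normalized (i.e. $p(j_0,i)=e_H$ and $p(j,i_0)=e_H$ for some fixed $i_0\in I$, $j_0\in J$ and all $i,j$). $S$ is called $K$-thin if $K(S)$ has such a normalized Rees matrix structure with $|I|=1$ or $|J|=1$; equivalently, $K(S)$ is left-simple or right-simple. *)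

From mathcomp Require Import all_boot all_fingroup.
Set Implicit Arguments. Unset Strict Implicit. Unset Printing Implicit Defensive.

Definition associative_op (T : Type) (op : T -> T -> T) :=
  forall x y z, op x (op y z) = op (op x y) z.

Definition left_commutative_sg (T : Type) (op : T -> T -> T) :=
  forall x y a, op (op x y) a = op (op y x) a.

Definition is_ideal (T : finType) (op : T -> T -> T) (A : {set T}) : bool :=
  [forall x in A, forall y : T, (op x y \in A) && (op y x \in A)].

Definition minimal_ideal (T : finType) (op : T -> T -> T) : {set T} :=
  \bigcap_(A : {set T} | is_ideal op A && (A != set0)) A.

Definition rees_mul (gT : finGroupType) (I J : finType) (p : J -> I -> gT)
    (a b : I * gT * J) : I * gT * J :=
  (a.1.1, (a.1.2 * p a.2 b.1.1 * b.1.2)%g, b.2).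

(* K(S) is isomorphic to a Rees matrix semigroup M(H; I, J; p) with H a
   finite group (here the whole group gT) and p normalized. *)
Definition rees_iso_K (T : finType) (op : T -> T -> T) (gT : finGroupType)
    (I J : finType) (p : J -> I -> gT) (f : I * gT * J -> T) : Prop :=
  injective f /\
  (forall x, x \in minimal_ideal op <-> exists t, f t = x) /\
  (forall a b, f (rees_mul p a b) = op (f a) (f b)).

Definition normalized (gT : finGroupType) (I J : finType) (p : J -> I -> gT) :=
  exists (i0 : I) (j0 : J), (forall i, p j0 i = 1%g) /\ (forall j, p j i0 = 1%g).

Definition K_thin (T : finType) (op : T -> T -> T) : Prop :=
  exists (gT : finGroupType) (I J : finType) (p : J -> I -> gT)
         (f : I * gT * J -> T),
    normalized p /\ rees_iso_K op p f /\ (#|I| = 1 \/ #|J| = 1).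

From mathcomp Require Import all_boot all_fingroup.
Set Implicit Arguments. Unset Strict Implicit. Unset Printing Implicit Defensive.

(* Let K be the minimal ideal. Left-commutativity makes every xK an ideal
   inside K, so xK = K and left multiplication by any x permutes K.  These
   permutations s_x form a group G, and the elements e of K with s_e = 1 (the
   left identities of K) form a right-zero semigroup E.  Since s_(xy) is s_y
   followed by s_x in the left-to-right product of {perm T}, the map
   (g, e) |-> g^-1 e is an isomorphism from M(G; 1, E; 1) onto K. *)

Lemma mulg_closed_group_set (gT : finGroupType) (A : {set gT}) :
  A != set0 -> {in A &, forall x y, (x * y)%g \in A} -> group_set A.
Proof.
case/set0Pn=> x Ax mulA; apply/group_setP; split=> //.
have expA n : (x ^+ n.+1)%g \in A.
  by elim: n => [|n IHn]; rewrite ?expg1 // expgS mulA.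
by rewrite -(expg_order x) -(prednK (order_gt0 x)) expA.
Qed.

Section IdOff.

Variables (T : finType) (A : {set T}) (f : T -> T).

Definition id_off z := if z \in A then f z else z.

Lemma id_off_inj :
  {in A, forall z, f z \in A} -> {in A &, injective f} -> injective id_off.
Proof.
move=> fA f_inj y z; rewrite /id_off.
case: (boolP (y \in A)) => yA; case: (boolP (z \in A)) => zA //.
- exact: f_inj.
- by move=> fyz; case/negP: zA; rewrite -fyz fA.
- by move=> fyz; case/negP: yA; rewrite fyz fA.
Qed.

End IdOff.

Section Ideals.

Variables (T : finType) (op : T -> T -> T).

Lemma idealP (A : {set T}) :
  reflect (forall x y, x \in A -> op x y \in A /\ op y x \in A) (is_ideal op A).
Proof.
apply: (iffP forall_inP) => [idA x y /idA /forallP /(_ y) /andP // | idA x Ax].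
by apply/forallP => y; apply/andP; apply: idA.
Qed.

Lemma ideal_setT : is_ideal op setT.
Proof. by apply/idealP => x y; rewrite !inE. Qed.

Lemma idealI (A B : {set T}) :
  is_ideal op A -> is_ideal op B -> is_ideal op (A :&: B).
Proof.
move=> /idealP idA /idealP idB; apply/idealP => x y /setIP [Ax Bx].
rewrite !inE; have [-> ->] := idA x y Ax; by have [-> ->] := idB x y Bx.
Qed.

Lemma idealI_neq0 (A B : {set T}) : is_ideal op A -> is_ideal op B ->
  A != set0 -> B != set0 -> A :&: B != set0.
Proof.
move=> /idealP idA /idealP idB /set0Pn [a Aa] /set0Pn [b Bb].
by apply/set0Pn; exists (op a b); rewrite inE (idA a b Aa).1 (idB b a Bb).2.
Qed.

Lemma minimal_idealE (A : {set T}) : is_ideal op A -> A != set0 ->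
  (forall B, is_ideal op B -> B != set0 -> A \subset B) -> minimal_ideal op = A.
Proof.
move=> idA nzA minA; apply/eqP; rewrite eqEsubset.
rewrite [minimal_ideal _ \subset _]bigcap_inf ?idA ?nzA //=.
by apply/bigcapsP => B /andP [idB nzB]; apply: minA.
Qed.

Lemma minimal_idealP : 0 < #|T| ->
  [/\ is_ideal op (minimal_ideal op), minimal_ideal op != set0 &
      forall B, is_ideal op B -> B != set0 -> minimal_ideal op \subset B].
Proof.
rewrite -cardsT card_gt0 => nzT.
have idT : is_ideal op [set: T] && ([set: T] != set0) by rewrite ideal_setT.
have [A /andP [idA nzA] cardA] :=
  @arg_minnP _ _ (fun A => is_ideal op A && (A != set0)) (fun A => #|A|) idT.
suff minA B : is_ideal op B -> B != set0 -> A \subset B.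
  by rewrite (minimal_idealE idA nzA minA).
move=> idB nzB; have idAB := idealI idA idB.
have leAB := cardA _ (introT andP (conj idAB (idealI_neq0 idA idB nzA nzB))).
have /eqP <- : A :&: B == A by rewrite eqEcard subsetIl.
exact: subsetIr.
Qed.

End Ideals.

Section LeftCommutative.

Variables (T : finType) (op : T -> T -> T).
Hypotheses (nzT : 0 < #|T|) (assoc : associative_op op)
  (lcomm : left_commutative_sg op).

Local Notation K := (minimal_ideal op).

Lemma ideal_lmul (A : {set T}) x :
  is_ideal op A -> is_ideal op [set op x a | a in A].
Proof.
move=> /idealP idA; apply/idealP => _ y /imsetP [a Aa ->].
have [ayA yaA] := idA a y Aa.
by split; [rewrite -assoc | rewrite assoc lcomm -assoc]; apply: imset_f.
Qed.

Lemma minimal_ideal_mulr x : {in K, forall z, op x z \in K}.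
Proof.
have [/idealP idK _ _] := minimal_idealP op nzT.
by move=> z /(idK z x) [].
Qed.

Lemma lmul_minimal_ideal x : [set op x k | k in K] = K.
Proof.
have [idK nzK minK] := minimal_idealP op nzT.
apply/eqP; rewrite eqEsubset (minK _ (ideal_lmul x idK)) ?imset_eq0 // andbT.
by apply/subsetP => _ /imsetP [k Kk ->]; apply: minimal_ideal_mulr.
Qed.

Lemma lmul_minimal_ideal_inj x : {in K &, injective (op x)}.
Proof. by apply/imset_injP; rewrite lmul_minimal_ideal. Qed.

Definition lmul_perm x : {perm T} :=
  perm (id_off_inj (@minimal_ideal_mulr x) (@lmul_minimal_ideal_inj x)).

Lemma lmul_permE x z : z \in K -> lmul_perm x z = op x z.
Proof. by move=> Kz; rewrite permE /id_off Kz. Qed.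

Lemma lmul_perm_out x z : z \notin K -> lmul_perm x z = z.
Proof. by move=> Kz; rewrite permE /id_off (negbTE Kz). Qed.

Lemma lmul_permM x y : lmul_perm (op x y) = (lmul_perm y * lmul_perm x)%g.
Proof.
apply/permP => z; rewrite permM.
have [Kz | Kz] := boolP (z \in K); last by rewrite !lmul_perm_out.
by rewrite !lmul_permE ?minimal_ideal_mulr.
Qed.

Definition lgroup : {set {perm T}} := [set lmul_perm x | x : T].

Lemma mem_lgroup x : lmul_perm x \in lgroup.
Proof. by rewrite imset_f. Qed.

Lemma lgroup_group_set : group_set lgroup.
Proof.
apply: mulg_closed_group_set.
  have [x _] := card_gt0P nzT.
  by apply/set0Pn; exists (lmul_perm x); apply: mem_lgroup.
by move=> _ _ /imsetP [x _ ->] /imsetP [y _ ->]; rewrite -lmul_permM mem_lgroup.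
Qed.

Canonical lgroup_group := group lgroup_group_set.

Lemma lgroupV g : g \in lgroup -> exists x, (g^-1)%g = lmul_perm x.
Proof. by rewrite -groupV => /imsetP [x _ ->]; exists x. Qed.

Definition left_ids : {set T} := [set e in K | lmul_perm e == 1%g].

Lemma left_ids_sub : {subset left_ids <= K}.
Proof. by move=> e; rewrite inE => /andP []. Qed.

Lemma left_idK e z : e \in left_ids -> z \in K -> op e z = z.
Proof.
by rewrite inE => /andP [_ /eqP se1] Kz; rewrite -lmul_permE // se1 perm1.
Qed.

Lemma lmul_perm_left_id x e :
  e \in left_ids -> lmul_perm (op x e) = lmul_perm x.
Proof. by rewrite inE lmul_permM => /andP [_ /eqP ->]; rewrite mul1g. Qed.

(* With s_m = s_k^-1, the product m k is a left identity and s_k (m k) = k. *)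
Lemma minimal_ideal_left_id k :
  k \in K -> exists2 e, e \in left_ids & lmul_perm k e = k.
Proof.
move=> Kk; have [m smk] := lgroupV (mem_lgroup k).
have Kmk : op m k \in K by rewrite minimal_ideal_mulr.
exists (op m k); first by rewrite inE Kmk lmul_permM -smk mulgV /=.
by rewrite -lmul_permE // -permM -smk mulVg perm1.
Qed.

Definition lgroup_elt := [subg lgroup_group].
Definition left_id_elt := {e : T | e \in left_ids}.

Definition rees_embed (t : unit * lgroup_elt * left_id_elt) : T :=
  ((sgval t.1.2)^-1)%g (val t.2).

Lemma rees_embed_mul a b :
  rees_embed (rees_mul (fun _ _ => 1%g) a b) = op (rees_embed a) (rees_embed b).
Proof.
move: a b => [[[] g] [e1 Ee1]] [[[] h] [e2 Ee2]].
rewrite /rees_embed /= mulg1 invMg permM.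
have [x ->] := lgroupV (subgP g); have [y ->] := lgroupV (subgP h).
have [Ke1 Ke2] := (left_ids_sub Ee1, left_ids_sub Ee2).
have Kye2 : op y e2 \in K by rewrite minimal_ideal_mulr.
by rewrite [lmul_perm y e2]lmul_permE // !lmul_permE // -assoc (left_idK Ee1).
Qed.

Lemma rees_embed_inj : injective rees_embed.
Proof.
case=> [[[] g] [e1 Ee1]] [[[] h] [e2 Ee2]]; rewrite /rees_embed /=.
have [x gx] := lgroupV (subgP g); have [y hy] := lgroupV (subgP h).
have [Ke1 Ke2] := (left_ids_sub Ee1, left_ids_sub Ee2).
rewrite gx hy !lmul_permE // => exey.
have sxy : lmul_perm x = lmul_perm y.
  by rewrite -(lmul_perm_left_id x Ee1) exey lmul_perm_left_id.
have <- : g = h by apply/subg_inj/invg_inj; rewrite gx hy sxy.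
have e12 : e1 = e2.
  by apply: (@perm_inj _ (lmul_perm x)); rewrite {2}sxy !lmul_permE.
by move: Ee2; rewrite -e12 => Ee2; rewrite (bool_irrelevance Ee1 Ee2).
Qed.

Lemma mem_minimal_idealP x : x \in K <-> exists t, rees_embed t = x.
Proof.
split=> [Kx | [[[[] g] [e Ee]] <-]]; last first.
  have [y gy] := lgroupV (subgP g); have Ke := left_ids_sub Ee.
  by rewrite /rees_embed /= gy lmul_permE ?minimal_ideal_mulr.
have [e Ee sxe] := minimal_ideal_left_id Kx.
have Gsx : ((lmul_perm x)^-1)%g \in lgroup by rewrite groupV mem_lgroup.
exists (tt, subg lgroup_group (lmul_perm x)^-1, exist _ e Ee).
by rewrite /rees_embed /= subgK // invgK.
Qed.

Lemma exists_left_id : exists e, e \in left_ids.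
Proof.
have [_ /set0Pn [k Kk] _] := minimal_idealP op nzT.
by have [e Ee _] := minimal_ideal_left_id Kk; exists e.
Qed.

End LeftCommutative.

Theorem proposition7p8 (T : finType) (op : T -> T -> T) :
  0 < #|T| -> associative_op op -> left_commutative_sg op -> K_thin op.
Proof.
move=> nzT assoc lcomm.
have [e Ee] := exists_left_id nzT assoc lcomm.
exists _, unit, _, (fun _ _ => 1%g), (@rees_embed T op nzT assoc lcomm).
split; first by exists tt, (exist _ e Ee).
split; last by left; rewrite card_unit.
split; first exact: rees_embed_inj.
by split; [exact: mem_minimal_idealP | exact: rees_embed_mul].
Qed.
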